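(* If $G=\prod_{i=1}^tK[a_i,b_i]$ with $2\le b_1\le\cdots\le b_t$, then $$\mathrm{IR}(G)\le\frac1{b_1}\prod_{i=1}^ta_ib_i+\frac2{b_t}\prod_{i=1}^tb_i.$$
   Context: $K[a,b]$ is the balanced complete $b$-partite graph with $b$ parts of size $a$ (vertices adjacent iff in different parts); $\prod$ denotes the direct product of graphs ($(g_1,h_1)\sim(g_2,h_2)$ iff $g_1\sim g_2$ and $h_1\sim h_2$). A set $S$ is irredundant if every $v\in S$ has a private neighbor, i.e. a vertex in $N[v]\setminus N[S\setminus\{v\}]$ (closed neighborhoods). $\mathrm{IR}(G)$ is the maximum size of an irredundant set. *)

From HB Require Import structures.
From mathcomp Require Import all_boot all_order all_algebra.
Set Implicit Arguments. Unset Strict Implicit. Unset Printing Implicit Defensive.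

Definition cnbh (V : finType) (e : rel V) (v : V) : {set V} :=
  [set u | (u == v) || e v u].

Definition cnbhS (V : finType) (e : rel V) (S : {set V}) : {set V} :=
  \bigcup_(w in S) cnbh e w.

Definition irredundant (V : finType) (e : rel V) (S : {set V}) : bool :=
  [forall v in S, cnbh e v :\: cnbhS e (S :\ v) != set0].

Definition IR (V : finType) (e : rel V) : nat :=
  \max_(S : {set V} | irredundant e S) #|S|.

(* Vertices of the product of the K[a_i,b_i], i < n: a vertex has, in
   coordinate i, a pair (part in 'I_(b i), position in the part 'I_(a i)). *)
Definition prodK_vertex (n : nat) (a b : 'I_n -> nat) : finType :=
  {dffun forall i : 'I_n, ('I_(b i) * 'I_(a i))%type}.

Definition prodK_adj (n : nat) (a b : 'I_n -> nat) : rel (prodK_vertex a b) :=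
  fun f g => [forall i, (f i).1 != (g i).1].

From HB Require Import structures.
From mathcomp Require Import all_boot all_order all_algebra.
Set Implicit Arguments. Unset Strict Implicit. Unset Printing Implicit Defensive.
Import Order.TTheory GRing.Theory Num.Theory.

(* Split an irredundant set S into its isolated vertices S1 and the rest S2.
   S1 is independent, so any two of its vertices share a part in some
   coordinate; rotating all part indices by a common j < b_1 therefore maps
   S1 x [0, b_1) injectively into the vertex set, and |S1| b_1 <= prod a_i b_i.
   A vertex v of S2 has a private neighbour u outside S. Another vertex of S2
   with the same parts as v outside coordinate k is not adjacent to u, so its
   k-th part is that of u; and two vertices of S2 with equal parts coincide,
   since both would dominate the private neighbour of either. Hence each class
   of parts outside coordinate k meets S2 in at most two vertices, and
   |S2| <= 2 prod_(i != k) b_i; take k = t. *)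

Lemma card_le_mul_fibers (T T' : finType) (X : {set T}) (f : T -> T') (c : nat) :
  (forall y, #|[set x in X | f x == y]| <= c) -> #|X| <= #|T'| * c.
Proof.
move=> fiber_le; rewrite -sum1_card (partition_big f predT) //= -sum_nat_const.
apply: leq_sum => y _; apply: leq_trans (fiber_le y).
by rewrite -sum1_card; apply: eq_leq; apply: eq_bigl => x; rewrite !inE.
Qed.

Definition rot_ord (k : nat) (x : 'I_k) (j : nat) : 'I_k := insubd x ((x + j) %% k).

Lemma val_rot_ord (k : nat) (x : 'I_k) (j : nat) : val (rot_ord x j) = (x + j) %% k.
Proof. by rewrite val_insubd ltn_pmod // (leq_ltn_trans _ (ltn_ord x)). Qed.

Lemma rot_ord_eq (k : nat) (x y : 'I_k) (j l : nat) : j < k -> l < k ->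
  rot_ord x j = rot_ord y l -> (x == y) = (j == l).
Proof.
move=> jk lk /(congr1 val); rewrite !val_rot_ord => /eqP xjyl.
apply/eqP/eqP => [xy | jl]; first by move: xjyl; rewrite xy eqn_modDl !modn_small // => /eqP.
by apply/val_inj/eqP; move: xjyl; rewrite jl eqn_modDr !modn_small.
Qed.

Section Irredundance.
Variables (V : finType) (e : rel V).

Definition isolated (S : {set V}) : {set V} := [set v in S | [forall w in S, ~~ e v w]].

Lemma isolated_subset (S : {set V}) : isolated S \subset S.
Proof. by apply/subsetP => v; rewrite inE => /andP []. Qed.

Lemma isolated_indep (S : {set V}) : {in isolated S &, forall v w, ~~ e v w}.
Proof.
move=> v w; rewrite !inE => /andP [_ /forall_inP v_iso] /andP [wS _].
exact: v_iso.
Qed.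

Lemma IR_witness : exists2 S, irredundant e S & IR e = #|S|.
Proof.
have irr_gt0 : 0 < #|irredundant e|.
  by apply/card_gt0P; exists set0; apply/forall_inP => v; rewrite inE.
have [S irrS IR_S] := @eq_bigmax_cond _ _ (fun S : {set V} => #|S|) irr_gt0.
by exists S.
Qed.

Hypotheses (e_sym : symmetric e) (e_irr : irreflexive e).

Lemma irredundant_external_private (S : {set V}) (v : V) :
  irredundant e S -> v \in S :\: isolated S ->
  exists2 u, e v u & forall w, w \in S :\ v -> (w != u) && ~~ e w u.
Proof.
move=> /forall_inP irrS; rewrite !inE => /andP [v_niso vS].
have /set0Pn [u] := irrS v vS; rewrite !inE => /andP [u_nS u_v].
have u_priv w : w \in S :\ v -> (w != u) && ~~ e w u.
  move=> wSv; rewrite -negb_or; apply: contra u_nS => wu.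
  by apply/bigcupP; exists w; rewrite // inE eq_sym.
exists u => //; case/orP: u_v => [/eqP uv | //]; subst u.
move: v_niso; rewrite vS /= => /forall_inPn [w wS /negbNE vw].
have wv : w != v by apply: contraTneq vw => ->; rewrite e_irr.
by move: (u_priv w); rewrite !inE wv wS e_sym vw andbF => /(_ isT).
Qed.

End Irredundance.

Section ProductOfMultipartiteGraphs.
Variables (n : nat) (a b : 'I_n -> nat).
Local Notation V := (prodK_vertex a b).
Local Notation e := (@prodK_adj n a b).

Lemma card_prodK_vertex : #|V| = \prod_(i < n) (a i * b i).
Proof.
rewrite card_dep_ffun foldrE big_map big_enum /=.
by apply: eq_bigr => i _; rewrite card_prod !card_ord mulnC.
Qed.

Lemma prodK_adj_sym : symmetric e.
Proof. by move=> v w; apply/forallP/forallP => vw i; rewrite eq_sym. Qed.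

Lemma prodK_adj_irr : 0 < n -> irreflexive e.
Proof. by move=> n_gt0 v; apply/forallP => /(_ (Ordinal n_gt0)); rewrite eqxx. Qed.

Lemma prodK_adj_same_parts (v w u : V) :
  (forall i, (v i).1 = (w i).1) -> e v u = e w u.
Proof. by move=> vw; apply: eq_forallb => i; rewrite vw. Qed.

Definition shift_parts (v : V) (j : nat) : V :=
  [ffun i => (rot_ord (v i).1 j, (v i).2)].

Lemma indep_card_mul_le (I : {set V}) (m : nat) :
  (forall i, m <= b i) -> {in I &, forall v w, ~~ e v w} -> #|I| * m <= #|V|.
Proof.
move=> m_le indepI.
have -> : #|I| * m = #|setX I [set: 'I_m]| by rewrite cardsX cardsT card_ord.
rewrite -(@card_in_imset _ _ (fun x : V * 'I_m => shift_parts x.1 x.2)) ?max_card //.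
move=> [v j] [w l]; rewrite !inE /= !andbT => vI wI /ffunP vw.
have jb i : j < b i := leq_trans (ltn_ord j) (m_le i).
have lb i : l < b i := leq_trans (ltn_ord l) (m_le i).
have {}vw i : (v i).1 == (w i).1 = (j == l :> nat) /\ (v i).2 = (w i).2.
  by move: (vw i); rewrite !ffunE => -[/rot_ord_eq-> // vw2].
have [jl | jl] := eqVneq (j : nat) l.
  have {}jl : j = l := val_inj jl; subst l; congr (_, _).
  apply/ffunP => i; have [+ vw2] := vw i; rewrite eqxx => /eqP vw1.
  by rewrite [v i]surjective_pairing vw1 vw2 -surjective_pairing.
have /negP[] := indepI v w vI wI.
by apply/forallP => i; have [-> _] := vw i.
Qed.

Definition off_parts (k : 'I_n) (v : V) : {dffun forall i : {i | i != k}, 'I_(b (val i))} :=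
  [ffun i => (v (val i)).1].

Lemma card_off_parts (k : 'I_n) :
  #|{dffun forall i : {i | i != k}, 'I_(b (val i))}| = \prod_(i | i != k) b i.
Proof.
rewrite card_dep_ffun foldrE big_map big_enum /= (big_sub [pred i | i != k]) /=.
by apply: eq_bigr => i _; rewrite card_ord.
Qed.

Lemma eq_off_parts (k : 'I_n) (v w : V) :
  off_parts k v = off_parts k w -> forall i, i != k -> (v i).1 = (w i).1.
Proof. by move=> /ffunP vw i ik; have := vw (exist _ i ik); rewrite !ffunE. Qed.

Hypothesis n_gt0 : 0 < n.

Lemma nonisolated_same_parts_eq (S : {set V}) (v w : V) : irredundant e S ->
  v \in S :\: isolated e S -> w \in S -> (forall i, (v i).1 = (w i).1) -> v = w.
Proof.
move=> irrS vT wS vw.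
have [u vu u_priv] := irredundant_external_private prodK_adj_sym (prodK_adj_irr n_gt0) irrS vT.
apply/eqP; apply: contraT => wv; have := u_priv w.
by rewrite !inE eq_sym wv wS -(prodK_adj_same_parts u vw) vu andbF => /(_ isT).
Qed.

Lemma nonisolated_off_parts_eq (S : {set V}) (k : 'I_n) (v w z : V) : irredundant e S ->
  v \in S :\: isolated e S -> w \in S :\: isolated e S -> z \in S :\: isolated e S ->
  w != v -> z != v -> off_parts k w = off_parts k v -> off_parts k z = off_parts k v ->
  w = z.
Proof.
move=> irrS vT wT zT wv zv wkv zkv.
have [u vu u_priv] := irredundant_external_private prodK_adj_sym (prodK_adj_irr n_gt0) irrS vT.
have part_k y : y \in S :\: isolated e S -> y != v -> off_parts k y = off_parts k v ->
    (y k).1 = (u k).1.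
  move=> yT yv ykv; have /andP [_ /forallPn [i /negbNE /eqP yu]] : (y != u) && ~~ e y u.
    by apply: u_priv; move: yT; rewrite !inE yv => /andP [].
  have [<- // | ik] := eqVneq i k.
  by move/forallP: vu => /(_ i); rewrite -(eq_off_parts ykv) // yu eqxx.
have zS : z \in S by move: zT; rewrite inE => /andP [].
apply: (nonisolated_same_parts_eq irrS wT zS) => i.
have [-> | ik] := eqVneq i k; first by rewrite (part_k w) // (part_k z).
by rewrite (eq_off_parts wkv) // (eq_off_parts zkv).
Qed.

Lemma nonisolated_off_parts_fiber (S : {set V}) (k : 'I_n) p : irredundant e S ->
  #|[set v in S :\: isolated e S | off_parts k v == p]| <= 2.
Proof.
move=> irrS; rewrite leqNgt; apply/card_gt2P => -[v [w [z [[vX wX zX] [vw wz zv]]]]].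
move: vX wX zX => /setIdP [vT /eqP vp] /setIdP [wT /eqP wp] /setIdP [zT /eqP zp].
have := nonisolated_off_parts_eq (k := k) irrS vT wT zT; rewrite eq_sym vw zv wp zp vp.
by move=> /(_ isT isT erefl erefl) wz'; rewrite wz' eqxx in wz.
Qed.

Lemma card_nonisolated_le (S : {set V}) (k : 'I_n) : irredundant e S ->
  #|S :\: isolated e S| <= 2 * \prod_(i | i != k) b i.
Proof.
move=> irrS; rewrite mulnC -card_off_parts.
apply: (card_le_mul_fibers (f := off_parts k)) => p.
exact: nonisolated_off_parts_fiber.
Qed.

End ProductOfMultipartiteGraphs.

Local Open Scope ring_scope.

Theorem theorem5p4 (t : nat) (a b : 'I_t.+1 -> nat)
  (hb2 : forall i, (2 <= b i)%N)
  (hmono : forall i j : 'I_t.+1, (i <= j)%N -> (b i <= b j)%N) :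
  ((IR (@prodK_adj t.+1 a b))%:R : rat)
    <= (\prod_(i < t.+1) (a i * b i))%N%:R / (b ord0)%:R
       + 2 * (\prod_(i < t.+1) b i)%N%:R / (b ord_max)%:R.
Proof.
have b_gt0 i : (0 < b i)%N := ltnW (hb2 i).
set e := @prodK_adj t.+1 a b.
have [S irrS ->] := IR_witness e.
rewrite -(cardsID (isolated e S) S) (setIidPr (isolated_subset e S)) natrD.
apply: lerD.
  rewrite ler_pdivlMr ?ltr0n // -natrM ler_nat -card_prodK_vertex.
  by apply: indep_card_mul_le => [i|]; [apply: hmono | apply: isolated_indep].
rewrite (bigD1 ord_max) //= natrM mulrCA mulrC mulKf ?pnatr_eq0 -?lt0n //.
by rewrite -natrM ler_nat; apply: card_nonisolated_le.
Qed.
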